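(* Let $\mathcal{G}=(G,\odot,\leq)$ be a real continuous Alo-group with $G$ an open interval of $\mathbb{R}$ and identity $e$, and let $\tilde A$ be an $n\times n$ $[\mathcal{G}]$-reciprocal IPCM with $n\geq 3$. Then $I_{[\mathcal{G}]}(\tilde A)\geq e$, and $I_{[\mathcal{G}]}(\tilde A)=e$ if and only if $\tilde A$ is $[\mathcal{G}]$-consistent.
   Context: An Alo-group $(G,\odot,\leq)$ is an Abelian group with a weak order $\leq$ such that $a\leq b\Rightarrow a\odot c\leq b\odot c$; real means $G\subseteq\mathbb{R}$ with usual order, continuous means $\odot$ is continuous. $a\div b=a\odot b^{(-1)}$, $\|a\|_{\mathcal{G}}=\max\{a,a^{(-1)}\}$, $d_{\mathcal{G}}(a,b)=\|a\div b\|_{\mathcal{G}}$. For $m\in\mathbb{N}$, $a^{(m)}$ is the $m$-fold $\odot$-product of $a$, and $a^{(1/m)}$ is the unique $x\in G$ with $x^{(m)}=a$. $[G]=\{[a^-,a^+]: a^-,a^+\in G,\ a^-\leq a^+\}$; $\tilde a^{(-1)}=[(a^+)^{(-1)},(a^-)^{(-1)}]$; $\tilde a\odot_{[G]}\tilde b=\{a\odot b: a\in\tilde a,b\in\tilde b\}$; $d_{[\mathcal{G}]}(\tilde a,\tilde b)=\max\{d_{\mathcal{G}}(a^-,b^-),d_{\mathcal{G}}(a^+,b^+)\}$. An IPCM $\tilde A=([a^-_{ij},a^+_{ij}])$ is an $n\times n$ matrix with entries in $[G]$; $[\mathcal{G}]$-reciprocal means $\tilde a_{ji}=\tilde a_{ij}^{(-1)}$;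 $[\mathcal{G}]$-consistent means $\tilde a_{ij}\odot_{[G]}\tilde a_{jk}\odot_{[G]}\tilde a_{ki}=\tilde a_{ik}\odot_{[G]}\tilde a_{kj}\odot_{[G]}\tilde a_{ji}$ for all $i,j,k$. Let $\tilde a_{ijk}=[a^-_{ij}\odot a^-_{jk}\odot a^-_{ki},\ a^+_{ij}\odot a^+_{jk}\odot a^+_{ki}]$ and $\tilde a_{ikj}=[a^-_{ik}\odot a^-_{kj}\odot a^-_{ji},\ a^+_{ik}\odot a^+_{kj}\odot a^+_{ji}]$. The $[\mathcal{G}]$-consistency index is $I_{[\mathcal{G}]}(\tilde A)=\Big(\bigodot_{i<j<k}d_{[\mathcal{G}]}(\tilde a_{ijk},\tilde a_{ikj})\Big)^{(1/|T|)}$, where $T=\{(i,j,k):i<j<k\}$, $|T|=n(n-1)(n-2)/6$. *)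

From Stdlib Require Import Reals List Arith ClassicalEpsilon.
From Coquelicot Require Import Rbar.
Import ListNotations.
Open Scope R_scope.

Record real_cont_alo_group (inG : R -> Prop) (op : R -> R -> R) (e : R)
    (inv : R -> R) : Prop := {
  alo_open_interval : exists a b : Rbar, Rbar_lt a b /\
      forall x, inG x <-> (Rbar_lt a x /\ Rbar_lt x b);
  alo_closed : forall x y, inG x -> inG y -> inG (op x y);
  alo_assoc : forall x y z, inG x -> inG y -> inG z ->
      op (op x y) z = op x (op y z);
  alo_comm : forall x y, inG x -> inG y -> op x y = op y x;
  alo_e_in : inG e;
  alo_e_id : forall x, inG x -> op x e = x;
  alo_inv_in : forall x, inG x -> inG (inv x);
  alo_inv_r : forall x, inG x -> op x (inv x) = e;
  alo_monotone : forall a b c, inG a -> inG b -> inG c -> a <= b ->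
      op a c <= op b c;
  alo_continuous : forall x y, inG x -> inG y -> forall eps, 0 < eps ->
      exists delta, 0 < delta /\ forall x' y', inG x' -> inG y' ->
        Rabs (x' - x) < delta -> Rabs (y' - y) < delta ->
        Rabs (op x' y' - op x y) < eps
}.

Section AloDefs.
Variables (inG : R -> Prop) (op : R -> R -> R) (e : R) (inv : R -> R).

Definition gdiv (a b : R) : R := op a (inv b).
Definition gnorm (a : R) : R := Rmax a (inv a).
Definition gdist (a b : R) : R := gnorm (gdiv a b).

Fixpoint gpow (m : nat) (a : R) : R :=
  match m with O => e | S m' => op a (gpow m' a) end.

Definition groot (m : nat) (a : R) : R :=
  epsilon (inhabits 0) (fun x => inG x /\ gpow m x = a).

Definition ival (lo up : R) : R -> Prop := fun x => lo <= x <= up.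
Definition setmul (S T : R -> Prop) : R -> Prop :=
  fun z => exists x y, S x /\ T y /\ z = op x y.
Definition idist (lo1 up1 lo2 up2 : R) : R :=
  Rmax (gdist lo1 lo2) (gdist up1 up2).

(* An n x n IPCM is given by lower/upper entry functions alo, aup on
   indices 0..n-1. *)
Definition is_IPCM (n : nat) (alo aup : nat -> nat -> R) : Prop :=
  forall i j, (i < n)%nat -> (j < n)%nat ->
    inG (alo i j) /\ inG (aup i j) /\ alo i j <= aup i j.

Definition reciprocal (n : nat) (alo aup : nat -> nat -> R) : Prop :=
  forall i j, (i < n)%nat -> (j < n)%nat ->
    alo j i = inv (aup i j) /\ aup j i = inv (alo i j).

Definition consistent (n : nat) (alo aup : nat -> nat -> R) : Prop :=
  forall i j k, (i < n)%nat -> (j < n)%nat -> (k < n)%nat ->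
    forall z,
      setmul (setmul (ival (alo i j) (aup i j)) (ival (alo j k) (aup j k)))
             (ival (alo k i) (aup k i)) z <->
      setmul (setmul (ival (alo i k) (aup i k)) (ival (alo k j) (aup k j)))
             (ival (alo j i) (aup j i)) z.

Definition triples (n : nat) : list (nat * nat * nat) :=
  flat_map (fun i =>
    flat_map (fun j =>
      map (fun k => (i, j, k)) (seq (S j) (n - S j)))
      (seq (S i) (n - S i)))
    (seq 0 n).

Definition tri_dist (alo aup : nat -> nat -> R) (t : nat * nat * nat) : R :=
  let '(i, j, k) := t in
  idist (op (op (alo i j) (alo j k)) (alo k i))
        (op (op (aup i j) (aup j k)) (aup k i))
        (op (op (alo i k) (alo k j)) (alo j i))
        (op (op (aup i k) (aup k j)) (aup j i)).

(* I_[G](A) = (⊙_{i<j<k} d_[G](a_ijk, a_ikj))^(1/|T|), |T| = n(n-1)(n-2)/6 *)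
Definition consistency_index (n : nat) (alo aup : nat -> nat -> R) : R :=
  groot ((n * (n - 1) * (n - 2)) / 6)
        (fold_right (fun t acc => op (tri_dist alo aup t) acc) e (triples n)).

End AloDefs.

(* Every d_[G](ã_ijk, ã_ikj) is >= e, with equality iff ã_ijk = ã_ikj, and a
   product of elements >= e is >= e, with equality iff every factor is e.  As
   x |-> x^(m) is strictly increasing on G, and maps G ∩ [e, P] onto [e, P] by
   continuity and the intermediate value theorem, the |T|-th root inherits both
   properties.  Finally, in an interval group the product of intervals is the
   interval of the products of endpoints, so [G]-consistency at (i, j, k) is the
   equality of the endpoints of ã_ijk and ã_ikj; by commutativity this condition
   is invariant under permutations of (i, j, k) and trivial when two indices
   coincide, so the triples i < j < k suffice. *)

From Stdlib Require Import Reals Lra Lia List ClassicalEpsilon.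
From Coquelicot Require Import Rbar.
Open Scope R_scope.

Definition clamp (a b x : R) : R := Rmax a (Rmin b x).

Lemma clamp_bounds a b x : a <= b -> a <= clamp a b x <= b.
Proof. unfold clamp, Rmax, Rmin; repeat destruct Rle_dec; lra. Qed.

Lemma clamp_id a b x : a <= x <= b -> clamp a b x = x.
Proof. unfold clamp, Rmax, Rmin; repeat destruct Rle_dec; lra. Qed.

Lemma clamp_lipschitz a b x y : Rabs (clamp a b x - clamp a b y) <= Rabs (x - y).
Proof.
  unfold clamp, Rmax, Rmin; repeat destruct Rle_dec; unfold Rabs;
    repeat destruct Rcase_abs; lra.
Qed.

Lemma IVT_within (f : R -> R) (a b y : R) : a <= b ->
  (forall x, a <= x <= b -> forall eps, 0 < eps -> exists delta, 0 < delta /\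
     forall x', a <= x' <= b -> Rabs (x' - x) < delta -> Rabs (f x' - f x) < eps) ->
  f a <= y <= f b -> exists x, a <= x <= b /\ f x = y.
Proof.
  intros Hab Hf Hy.
  set (g := fun x => f (clamp a b x) - y).
  assert (Hg : continuity g).
  { intros x0; unfold continuity_pt, continue_in, limit1_in, limit_in; simpl.
    intros eps Heps.
    destruct (Hf (clamp a b x0) (clamp_bounds a b x0 Hab) eps Heps) as (d & Hd & H).
    exists d; split; [exact Hd|]. intros x [_ Hx]. unfold R_dist, g.
    replace (f (clamp a b x) - y - (f (clamp a b x0) - y))
      with (f (clamp a b x) - f (clamp a b x0)) by ring.
    apply H; [apply clamp_bounds; exact Hab|].
    eapply Rle_lt_trans; [apply clamp_lipschitz | exact Hx]. }
  destruct (IVT_cor g a b Hg Hab) as (x & Hx & Hgx).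
  { unfold g; rewrite !clamp_id by lra. nra. }
  exists x; split; [exact Hx|].
  unfold g in Hgx; rewrite clamp_id in Hgx by exact Hx. lra.
Qed.

Lemma Rmax_eq_lb c x y : c <= x -> c <= y -> Rmax x y = c <-> x = c /\ y = c.
Proof. intros Hx Hy; unfold Rmax; destruct Rle_dec; split; intros H; try destruct H; lra. Qed.

Lemma ival_ext L1 U1 L2 U2 : L1 <= U1 -> L2 <= U2 ->
  (forall z, ival L1 U1 z <-> ival L2 U2 z) <-> L1 = L2 /\ U1 = U2.
Proof.
  unfold ival; intros H1 H2; split.
  - intros H.
    assert (L2 <= L1 <= U2) by (apply H; lra).
    assert (L1 <= L2 <= U1) by (apply H; lra).
    assert (L2 <= U1 <= U2) by (apply H; lra).
    assert (L1 <= U2 <= U1) by (apply H; lra).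
    lra.
  - intros [-> ->]; tauto.
Qed.

Lemma triple_sym_ind (P : nat -> nat -> nat -> Prop) :
  (forall i j k, P i j k -> P j k i) ->
  (forall i j k, P i j k -> P i k j) ->
  (forall i k, P i i k) ->
  (forall i j k, (i < j < k)%nat -> P i j k) ->
  forall i j k, P i j k.
Proof.
  intros Hrot Hswap Hdiag Hsorted.
  assert (Hweak : forall i j k, (i <= j <= k)%nat -> P i j k).
  { intros i j k Hijk.
    destruct (Nat.eq_dec i j) as [<-|Hij]; [apply Hdiag|].
    destruct (Nat.eq_dec j k) as [<-|Hjk]; [apply Hrot, Hrot, Hdiag|].
    apply Hsorted; lia. }
  intros i j k.
  destruct (Nat.le_ge_cases i j), (Nat.le_ge_cases j k), (Nat.le_ge_cases i k);
    first
    [ apply Hweak; lia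
    | apply Hswap; apply Hweak; lia
    | apply Hrot; apply Hweak; lia
    | apply Hrot; apply Hrot; apply Hweak; lia
    | apply Hswap; apply Hrot; apply Hweak; lia
    | apply Hrot; apply Hswap; apply Hweak; lia ].
Qed.

Lemma triples_In n i j k : In (i, j, k) (triples n) <-> (i < j /\ j < k /\ k < n)%nat.
Proof.
  unfold triples; rewrite in_flat_map; split.
  - intros (i' & Hi' & H). rewrite in_flat_map in H. destruct H as (j' & Hj' & H).
    rewrite in_map_iff in H. destruct H as (k' & Heq & Hk').
    injection Heq; intros; subst. rewrite in_seq in *. lia.
  - intros. exists i. split; [rewrite in_seq; lia|].
    rewrite in_flat_map. exists j. split; [rewrite in_seq; lia|].
    rewrite in_map_iff. exists k. split; [reflexivity | rewrite in_seq; lia].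
Qed.

Definition gprod (op : R -> R -> R) (e : R) {A : Type} (f : A -> R) (l : list A) : R :=
  fold_right (fun t acc => op (f t) acc) e l.

Definition cycle_prod (op : R -> R -> R) (a : nat -> nat -> R) (i j k : nat) : R :=
  op (op (a i j) (a j k)) (a k i).

Definition consistent_at (op : R -> R -> R) (alo aup : nat -> nat -> R) (i j k : nat) : Prop :=
  cycle_prod op alo i j k = cycle_prod op alo i k j /\
  cycle_prod op aup i j k = cycle_prod op aup i k j.

Section AloGroup.
Context {inG : R -> Prop} {op : R -> R -> R} {e : R} {inv : R -> R}
  (HG : real_cont_alo_group inG op e inv).

Lemma inG_op x y : inG x -> inG y -> inG (op x y).
Proof. exact (alo_closed _ _ _ _ HG x y). Qed.
Lemma inG_e : inG e.
Proof. exact (alo_e_in _ _ _ _ HG). Qed.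
Lemma inG_inv x : inG x -> inG (inv x).
Proof. exact (alo_inv_in _ _ _ _ HG x). Qed.
#[local] Hint Resolve inG_op inG_e inG_inv : alo.

Lemma opA x y z : inG x -> inG y -> inG z -> op (op x y) z = op x (op y z).
Proof. exact (alo_assoc _ _ _ _ HG x y z). Qed.
Lemma opC x y : inG x -> inG y -> op x y = op y x.
Proof. exact (alo_comm _ _ _ _ HG x y). Qed.
Lemma op_e_r x : inG x -> op x e = x.
Proof. exact (alo_e_id _ _ _ _ HG x). Qed.
Lemma op_e_l x : inG x -> op e x = x.
Proof. intros; rewrite opC by auto with alo; apply op_e_r; auto. Qed.
Lemma op_inv_r x : inG x -> op x (inv x) = e.
Proof. exact (alo_inv_r _ _ _ _ HG x). Qed.
Lemma op_inv_l x : inG x -> op (inv x) x = e.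
Proof. intros; rewrite opC by auto with alo; apply op_inv_r; auto. Qed.

Lemma op_le_compat_r a b c : inG a -> inG b -> inG c -> a <= b -> op a c <= op b c.
Proof. exact (alo_monotone _ _ _ _ HG a b c). Qed.
Lemma op_le_compat_l a b c : inG a -> inG b -> inG c -> a <= b -> op c a <= op c b.
Proof. intros; rewrite !(opC c) by auto; apply op_le_compat_r; auto. Qed.
Lemma op_le_compat a b c d : inG a -> inG b -> inG c -> inG d ->
  a <= b -> c <= d -> op a c <= op b d.
Proof.
  intros; apply Rle_trans with (op b c); [apply op_le_compat_r | apply op_le_compat_l]; auto.
Qed.

Lemma op_le_reg_r a b c : inG a -> inG b -> inG c -> op a c <= op b c -> a <= b.
Proof.
  intros Ha Hb Hc H.
  rewrite <- (op_e_r a), <- (op_e_r b), <- (op_inv_r c), <- !opA by auto with alo.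
  apply op_le_compat_r; auto with alo.
Qed.
Lemma op_le_reg_l a b c : inG a -> inG b -> inG c -> op c a <= op c b -> a <= b.
Proof. intros; apply (op_le_reg_r a b c); auto; rewrite !(opC _ c); auto. Qed.

Lemma op_reg_r a b c : inG a -> inG b -> inG c -> op a c = op b c -> a = b.
Proof. intros; apply Rle_antisym; apply (op_le_reg_r _ _ c); auto; lra. Qed.

Lemma op_lt_compat_r a b c : inG a -> inG b -> inG c -> a < b -> op a c < op b c.
Proof.
  intros Ha Hb Hc H. destruct (Rlt_le_dec (op a c) (op b c)) as [|Hle]; [assumption|].
  apply op_le_reg_r in Hle; auto; lra.
Qed.

Lemma inG_between a b x : inG a -> inG b -> a <= x <= b -> inG x.
Proof.
  intros Ha Hb Hx. destruct (alo_open_interval _ _ _ _ HG) as (l & u & _ & HI).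
  apply HI in Ha as [Hla _]; apply HI in Hb as [_ Hbu]; apply HI; split.
  - apply Rbar_lt_le_trans with a; [exact Hla | simpl; lra].
  - apply Rbar_le_lt_trans with b; [simpl; lra | exact Hbu].
Qed.

Lemma inv_e : inv e = e.
Proof. rewrite <- (op_e_l (inv e)) by auto with alo. apply op_inv_r, inG_e. Qed.

Lemma gdiv_eq_e a b : inG a -> inG b -> gdiv op inv a b = e <-> a = b.
Proof.
  intros Ha Hb; unfold gdiv; split; intros H.
  - apply (op_reg_r a b (inv b)); auto with alo. rewrite H, op_inv_r; auto.
  - subst; apply op_inv_r; auto.
Qed.

Lemma gnorm_ge_e x : inG x -> e <= gnorm inv x.
Proof.
  intros Hx; unfold gnorm. destruct (Rle_dec e x) as [Hex|Hxe].
  - apply Rle_trans with x; [exact Hex | apply Rmax_l].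
  - apply Rle_trans with (inv x); [|apply Rmax_r].
    rewrite <- (op_inv_r x) by auto.
    rewrite <- (op_e_l (inv x)) at 2 by auto with alo.
    apply op_le_compat_r; auto with alo; lra.
Qed.

Lemma gnorm_eq_e x : inG x -> gnorm inv x = e <-> x = e.
Proof.
  intros Hx; unfold gnorm; split; intros H.
  - assert (x <= e) by (rewrite <- H; apply Rmax_l).
    assert (inv x <= e) by (rewrite <- H; apply Rmax_r).
    assert (e <= op x e).
    { rewrite <- (op_inv_r x) at 1 by auto. apply op_le_compat_l; auto with alo. }
    rewrite op_e_r in * by auto. lra.
  - subst; rewrite inv_e; apply Rmax_left; lra.
Qed.

Lemma gdist_ge_e a b : inG a -> inG b -> e <= gdist op inv a b.
Proof. intros; apply gnorm_ge_e; unfold gdiv; auto with alo. Qed.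

Lemma gdist_eq_e a b : inG a -> inG b -> gdist op inv a b = e <-> a = b.
Proof.
  intros; unfold gdist; rewrite gnorm_eq_e by (unfold gdiv; auto with alo).
  apply gdiv_eq_e; auto.
Qed.

Lemma inG_idist a b c d : inG a -> inG b -> inG c -> inG d -> inG (idist op inv a b c d).
Proof. intros; unfold idist, gdist, gnorm, gdiv, Rmax; repeat destruct Rle_dec; auto with alo. Qed.

Lemma idist_ge_e a b c d : inG a -> inG b -> inG c -> inG d -> e <= idist op inv a b c d.
Proof. intros; apply Rle_trans with (gdist op inv a c); [apply gdist_ge_e | apply Rmax_l]; auto. Qed.

Lemma idist_eq_e a b c d : inG a -> inG b -> inG c -> inG d ->
  idist op inv a b c d = e <-> a = c /\ b = d.
Proof.
  intros; unfold idist. rewrite Rmax_eq_lb by (apply gdist_ge_e; auto).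
  rewrite !gdist_eq_e by auto. tauto.
Qed.

Lemma op_ge_e x y : inG x -> inG y -> e <= x -> e <= y -> e <= op x y.
Proof. intros; rewrite <- (op_e_r e) by auto with alo; apply op_le_compat; auto with alo. Qed.

Lemma op_eq_e x y : inG x -> inG y -> e <= x -> e <= y -> op x y = e <-> x = e /\ y = e.
Proof.
  intros Hx Hy Hex Hey.
  assert (x <= op x y) by (rewrite <- (op_e_r x) at 1 by auto; apply op_le_compat_l; auto with alo).
  assert (y <= op x y) by (rewrite <- (op_e_l y) at 1 by auto; apply op_le_compat_r; auto with alo).
  split; [intros; lra | intros [-> ->]; apply op_e_r, inG_e].
Qed.

Section Product.
Context {A : Type} (f : A -> R).

Lemma gprod_bounds l : (forall t, In t l -> inG (f t) /\ e <= f t) ->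
  inG (gprod op e f l) /\ e <= gprod op e f l.
Proof.
  induction l as [|a l IH]; intros Hl; simpl; [split; [apply inG_e | lra]|].
  destruct (Hl a (or_introl eq_refl)).
  destruct IH as [? ?]; [intros t Ht; apply Hl; right; exact Ht|].
  split; [apply inG_op | apply op_ge_e]; auto.
Qed.

Lemma gprod_eq_e l : (forall t, In t l -> inG (f t) /\ e <= f t) ->
  gprod op e f l = e <-> forall t, In t l -> f t = e.
Proof.
  induction l as [|a l IH]; intros Hl; simpl; [tauto|].
  assert (Htl : forall t, In t l -> inG (f t) /\ e <= f t) by (intros; apply Hl; right; auto).
  destruct (Hl a (or_introl eq_refl)) as [Ha Hea], (gprod_bounds l Htl) as [Hl' Hel'].
  rewrite op_eq_e, IH by auto.
  split; [intros [Hfa Hrest] t [<-|Ht]; auto | intros Hall; split; auto].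
Qed.
End Product.

Lemma gpow_in m x : inG x -> inG (gpow op e m x).
Proof. induction m; simpl; auto with alo. Qed.
#[local] Hint Resolve gpow_in : alo.

Lemma gpow_e m : gpow op e m e = e.
Proof. induction m; simpl; [reflexivity | rewrite IHm; apply op_e_r, inG_e]. Qed.

Lemma gpow_le_compat m x y : inG x -> inG y -> x <= y -> gpow op e m x <= gpow op e m y.
Proof. intros; induction m; simpl; [lra | apply op_le_compat; auto with alo]. Qed.

Lemma gpow_lt_compat m x y : inG x -> inG y -> x < y ->
  gpow op e (S m) x < gpow op e (S m) y.
Proof.
  intros; simpl. apply Rlt_le_trans with (op y (gpow op e m x)).
  - apply op_lt_compat_r; auto with alo.
  - apply op_le_compat_l; auto with alo. apply gpow_le_compat; auto; lra.
Qed.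

Lemma gpow_continuous m x : inG x -> forall eps, 0 < eps -> exists delta, 0 < delta /\
  forall x', inG x' -> Rabs (x' - x) < delta ->
    Rabs (gpow op e m x' - gpow op e m x) < eps.
Proof.
  intros Hx; induction m; intros eps Heps; simpl.
  - exists 1; split; [lra|]. intros. rewrite Rminus_diag, Rabs_R0; exact Heps.
  - destruct (alo_continuous _ _ _ _ HG x (gpow op e m x) Hx (gpow_in m x Hx) eps Heps)
      as (d1 & Hd1 & H1).
    destruct (IHm d1 Hd1) as (d2 & Hd2 & H2).
    exists (Rmin d1 d2); split; [apply Rmin_glb_lt; auto|].
    intros x' Hx' Hd. apply H1; auto with alo.
    + apply Rlt_le_trans with (Rmin d1 d2); [exact Hd | apply Rmin_l].
    + apply H2; [exact Hx'|]. apply Rlt_le_trans with (Rmin d1 d2); [exact Hd | apply Rmin_r].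
Qed.

Lemma gpow_onto m P : inG P -> e <= P -> exists r, inG r /\ gpow op e (S m) r = P.
Proof.
  intros HP HeP.
  destruct (IVT_within (gpow op e (S m)) e P P HeP) as (r & Hr & HrP).
  - intros x Hx eps Heps.
    destruct (gpow_continuous (S m) x (inG_between e P x inG_e HP Hx) eps Heps)
      as (d & Hd & H).
    exists d; split; [exact Hd|].
    intros x' Hx'; apply H, (inG_between e P); auto with alo.
  - rewrite gpow_e; split; [exact HeP|]. simpl.
    rewrite <- (op_e_r P) at 1 by exact HP. apply op_le_compat_l; auto with alo.
    apply Rle_trans with (gpow op e m e); [rewrite gpow_e; lra|].
    apply gpow_le_compat; auto with alo.
  - exists r; split; [apply (inG_between e P); auto with alo | exact HrP].
Qed.

Lemma groot_spec m P : inG P -> e <= P ->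
  inG (groot inG op e (S m) P) /\ gpow op e (S m) (groot inG op e (S m) P) = P.
Proof. intros; unfold groot; apply epsilon_spec, gpow_onto; auto. Qed.

Lemma groot_ge_e m P : inG P -> e <= P -> e <= groot inG op e (S m) P.
Proof.
  intros HP HeP. destruct (groot_spec m P HP HeP) as [Hr HrP].
  destruct (Rle_lt_dec e (groot inG op e (S m) P)) as [|Hlt]; [assumption|].
  pose proof (gpow_lt_compat m _ _ Hr inG_e Hlt) as Hpow.
  rewrite gpow_e, HrP in Hpow. lra.
Qed.

Lemma groot_eq_e m P : inG P -> e <= P -> groot inG op e (S m) P = e <-> P = e.
Proof.
  intros HP HeP. destruct (groot_spec m P HP HeP) as [Hr HrP]. split; intros H.
  - rewrite <- HrP, H. apply gpow_e.
  - destruct (Rle_lt_or_eq_dec _ _ (groot_ge_e m P HP HeP)) as [Hlt|]; [|auto].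
    pose proof (gpow_lt_compat m _ _ inG_e Hr Hlt) as Hpow.
    rewrite gpow_e, HrP in Hpow. lra.
Qed.

Lemma setmul_ext_l (S S' T : R -> Prop) z : (forall x, S x <-> S' x) ->
  setmul op S T z <-> setmul op S' T z.
Proof.
  intros HS; unfold setmul; split; intros (x & y & Hx & Hy & Hz);
    exists x, y; repeat split; auto; apply HS; exact Hx.
Qed.

Lemma setmul_ival a1 b1 a2 b2 z : inG a1 -> inG b1 -> inG a2 -> inG b2 ->
  a1 <= b1 -> a2 <= b2 ->
  setmul op (ival a1 b1) (ival a2 b2) z <-> ival (op a1 a2) (op b1 b2) z.
Proof.
  intros Ha1 Hb1 Ha2 Hb2 H1 H2; unfold setmul, ival; split.
  - intros (x & y & Hx & Hy & ->).
    assert (inG x) by (apply (inG_between a1 b1); auto).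
    assert (inG y) by (apply (inG_between a2 b2); auto).
    split; apply op_le_compat; auto; lra.
  - intros Hz.
    assert (inG z) by (apply (inG_between (op a1 a2) (op b1 b2)); auto with alo).
    (* Below b1 a2 vary the first factor with the second fixed at a2; above it,
       fix the first factor at b1. *)
    destruct (Rle_dec z (op b1 a2)) as [Hzl|Hzr].
    + assert (Hdiv : op (op z (inv a2)) a2 = z)
        by (rewrite opA, op_inv_l, op_e_r; auto with alo).
      exists (op z (inv a2)), a2.
      repeat split; try lra; apply (op_le_reg_r _ _ a2); auto with alo; rewrite Hdiv; lra.
    + assert (Hdiv : op b1 (op (inv b1) z) = z)
        by (rewrite <- opA, op_inv_r, op_e_l; auto with alo).
      exists b1, (op (inv b1) z).
      repeat split; try lra; apply (op_le_reg_l _ _ b1); auto with alo; rewrite Hdiv; lra.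
Qed.

Lemma setmul3_ival a1 b1 a2 b2 a3 b3 z :
  inG a1 -> inG b1 -> inG a2 -> inG b2 -> inG a3 -> inG b3 ->
  a1 <= b1 -> a2 <= b2 -> a3 <= b3 ->
  setmul op (setmul op (ival a1 b1) (ival a2 b2)) (ival a3 b3) z <->
  ival (op (op a1 a2) a3) (op (op b1 b2) b3) z.
Proof.
  intros. rewrite (setmul_ext_l _ (ival (op a1 a2) (op b1 b2)))
    by (intro; apply setmul_ival; auto).
  apply setmul_ival; auto with alo; apply op_le_compat; auto.
Qed.

Lemma cycle_prod_rotate a i j k : inG (a i j) -> inG (a j k) -> inG (a k i) ->
  cycle_prod op a i j k = cycle_prod op a j k i.
Proof. intros; unfold cycle_prod; rewrite (opC (op (a j k) (a k i))), opA; auto with alo. Qed.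

Section Consistency.
Context {n : nat} {alo aup : nat -> nat -> R} (HA : is_IPCM inG n alo aup).

Lemma inG_alo i j : (i < n)%nat -> (j < n)%nat -> inG (alo i j).
Proof. intros; apply HA; auto. Qed.
Lemma inG_aup i j : (i < n)%nat -> (j < n)%nat -> inG (aup i j).
Proof. intros; apply HA; auto. Qed.
Lemma alo_le_aup i j : (i < n)%nat -> (j < n)%nat -> alo i j <= aup i j.
Proof. intros; apply HA; auto. Qed.
#[local] Hint Resolve inG_alo inG_aup alo_le_aup : alo.

Lemma cycle_prod_le i j k : (i < n)%nat -> (j < n)%nat -> (k < n)%nat ->
  cycle_prod op alo i j k <= cycle_prod op aup i j k.
Proof. intros; unfold cycle_prod; repeat apply op_le_compat; auto with alo. Qed.

Lemma consistent_iff_at : consistent op n alo aup <->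
  forall i j k, (i < n)%nat -> (j < n)%nat -> (k < n)%nat -> consistent_at op alo aup i j k.
Proof.
  unfold consistent, consistent_at.
  split; intros H i j k hi hj hk; specialize (H i j k hi hj hk).
  - apply ival_ext; [apply cycle_prod_le; auto .. |].
    intros z; unfold cycle_prod; rewrite <- !setmul3_ival by auto with alo. apply H.
  - intros z; rewrite !setmul3_ival by auto with alo. revert z.
    apply ival_ext; [apply cycle_prod_le; auto .. | exact H].
Qed.

Lemma consistent_at_rotate i j k : (i < n)%nat -> (j < n)%nat -> (k < n)%nat ->
  consistent_at op alo aup i j k -> consistent_at op alo aup j k i.
Proof.
  unfold consistent_at; intros hi hj hk [Hlo Hup].
  rewrite <- (cycle_prod_rotate alo i j k), <- (cycle_prod_rotate aup i j k), Hlo, Hup,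
    (cycle_prod_rotate alo i k j), (cycle_prod_rotate aup i k j),
    (cycle_prod_rotate alo k j i), (cycle_prod_rotate aup k j i) by auto with alo.
  split; reflexivity.
Qed.

Lemma consistent_at_diag i k : (i < n)%nat -> (k < n)%nat -> consistent_at op alo aup i i k.
Proof. intros; split; apply cycle_prod_rotate; auto with alo. Qed.

Lemma consistent_iff_sorted : consistent op n alo aup <->
  forall i j k, (i < j)%nat -> (j < k)%nat -> (k < n)%nat -> consistent_at op alo aup i j k.
Proof.
  rewrite consistent_iff_at; split; intros H.
  - intros i j k hij hjk hk; apply H; lia.
  - apply (triple_sym_ind (fun i j k => (i < n)%nat -> (j < n)%nat -> (k < n)%nat ->
                                        consistent_at op alo aup i j k)).
    + intros i j k Hijk hj hk hi; apply consistent_at_rotate; auto.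
    + intros i j k Hijk hi hk hj; destruct (Hijk hi hj hk); split; symmetry; assumption.
    + intros i k hi _ hk; apply consistent_at_diag; auto.
    + intros i j k Hijk _ _ hk; apply H; lia.
Qed.

Lemma inG_tri_dist i j k : (i < n)%nat -> (j < n)%nat -> (k < n)%nat ->
  inG (tri_dist op inv alo aup (i, j, k)).
Proof. intros; apply inG_idist; auto with alo. Qed.

Lemma tri_dist_ge_e i j k : (i < n)%nat -> (j < n)%nat -> (k < n)%nat ->
  e <= tri_dist op inv alo aup (i, j, k).
Proof. intros; apply idist_ge_e; auto with alo. Qed.

Lemma tri_dist_eq_e i j k : (i < n)%nat -> (j < n)%nat -> (k < n)%nat ->
  tri_dist op inv alo aup (i, j, k) = e <-> consistent_at op alo aup i j k.
Proof. intros; apply idist_eq_e; auto with alo. Qed.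

End Consistency.
End AloGroup.

Theorem proposition14 (inG : R -> Prop) (op : R -> R -> R) (e : R) (inv : R -> R)
  (HG : real_cont_alo_group inG op e inv)
  (n : nat) (alo aup : nat -> nat -> R)
  (Hn : (3 <= n)%nat)
  (HA : is_IPCM inG n alo aup)
  (Hrec : reciprocal inv n alo aup) :
  e <= consistency_index inG op e inv n alo aup /\
  (consistency_index inG op e inv n alo aup = e <-> consistent op n alo aup).
Proof.
  assert (HT : exists m, (n * (n - 1) * (n - 2) / 6 = S m)%nat).
  { exists (n * (n - 1) * (n - 2) / 6 - 1)%nat.
    assert (1 <= n * (n - 1) * (n - 2) / 6)%nat by (apply Nat.div_le_lower_bound; nia).
    lia. }
  destruct HT as [m HT]. unfold consistency_index; rewrite HT.
  change (fold_right _ e (triples n)) with (gprod op e (tri_dist op inv alo aup) (triples n)).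
  assert (Hd : forall t, In t (triples n) ->
            inG (tri_dist op inv alo aup t) /\ e <= tri_dist op inv alo aup t).
  { intros [[i j] k] Ht; apply triples_In in Ht.
    split; [apply (inG_tri_dist HG HA) | apply (tri_dist_ge_e HG HA)]; auto; lia. }
  destruct (gprod_bounds HG _ _ Hd) as [HPin HPge].
  split; [apply (groot_ge_e HG); auto|].
  rewrite (groot_eq_e HG), (gprod_eq_e HG), (consistent_iff_sorted HG HA) by auto.
  split; intros H.
  - intros i j k hij hjk hk.
    apply (tri_dist_eq_e HG HA); auto; try lia.
    apply H, triples_In; auto.
  - intros [[i j] k] Ht; apply triples_In in Ht.
    apply (tri_dist_eq_e HG HA); try lia; auto.
    apply H; lia.
Qed.
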